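(* Let $X$ be a set and $d,\rho$ metrics on $X$ such that $d$ is quasisymmetric to $\rho$, and assume $(X,d)$ is uniformly shrinking. Then (1) $(X,\rho)$ is uniformly shrinking; (2) if a measure $\mu$ on $X$ satisfies $(\mathrm{VD})_d$, then it also satisfies $(\mathrm{VD})_\rho$.
   Context: $d$ is quasisymmetric to $\rho$ if there is a homeomorphism $\theta$ of $[0,\infty)$ with $\rho(x,y)/\rho(x,z)\le\theta(d(x,y)/d(x,z))$ for all $x\ne z$. A metric space $(X,d)$ is uniformly shrinking if there is $\alpha\in(0,1)$ such that for all $x\in X$ and $r>0$ with $B_d(x,r)\ne X$ and $B_d(x,r)\ne\{x\}$, one has $B_d(x,r)\setminus B_d(x,\alpha r)\ne\emptyset$ (open balls). $\mu$ satisfies $(\mathrm{VD})_d$ if there is $C>0$ with $\mu(B_d(x,2r))\le C\mu(B_d(x,r))$ for all $x\in X$, $r>0$. *)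

From HB Require Import structures.
From mathcomp Require Import all_boot all_order all_algebra.
From mathcomp Require Import all_classical all_reals all_analysis.
Set Implicit Arguments. Unset Strict Implicit. Unset Printing Implicit Defensive.
Import Order.TTheory GRing.Theory Num.Theory numFieldNormedType.Exports.
Local Open Scope classical_set_scope.
Local Open Scope ring_scope.

Section Defs.
Variables (R : realType) (X : Type).

Definition is_metric (d : X -> X -> R) : Prop :=
  [/\ forall x y, 0 <= d x y,
      forall x y, d x y = 0 <-> x = y,
      forall x y, d x y = d y x &
      forall x y z, d x z <= d x y + d y z].

Definition oball (d : X -> X -> R) (x : X) (r : R) : set X :=
  [set y | d x y < r].

Definition homeo_halfline (theta : R -> R) : Prop :=
  exists theta' : R -> R,
    [/\ forall t, 0 <= t -> 0 <= theta t,
        forall t, 0 <= t -> 0 <= theta' t,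
        forall t, 0 <= t -> theta' (theta t) = t,
        forall t, 0 <= t -> theta (theta' t) = t &
        {within [set t : R | 0 <= t], continuous theta} /\
        {within [set t : R | 0 <= t], continuous theta'}].

Definition quasisymmetric (d rho : X -> X -> R) : Prop :=
  exists theta : R -> R, homeo_halfline theta /\
    forall x y z, x <> z -> rho x y / rho x z <= theta (d x y / d x z).

Definition uniformly_shrinking (d : X -> X -> R) : Prop :=
  exists alpha : R, 0 < alpha < 1 /\
    forall x r, 0 < r -> oball d x r <> setT -> oball d x r <> [set x] ->
      exists y, oball d x r y /\ ~ oball d x (alpha * r) y.

End Defs.

(** Every d-open set is measurable (i.e. the measure is defined on
    (at least) the Borel sets of (X,d)). *)
Definition d_open_measurable (R : realType) (dsp : measure_display) (Y : measurableType dsp)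
  (d : Y -> Y -> R) : Prop :=
  forall A : set Y, (forall x, A x -> exists r, 0 < r /\ oball d x r `<=` A) ->
    measurable A.

Definition VD (R : realType) (dsp : measure_display) (Y : measurableType dsp)
  (d : Y -> Y -> R) (mu : {measure set Y -> \bar R}) : Prop :=
  exists C : R, 0 < C /\ forall x r, 0 < r ->
    (mu (oball d x (2 * r)) <= C%:E * mu (oball d x r))%E.

From HB Require Import structures.
From mathcomp Require Import all_boot all_order all_algebra.
From mathcomp Require Import all_classical all_reals all_analysis.
From mathcomp Require Import lra.
Set Implicit Arguments. Unset Strict Implicit. Unset Printing Implicit Defensive.
Import Order.TTheory GRing.Theory Num.Theory numFieldNormedType.Exports.
Import Num.Def.
Local Open Scope classical_set_scope.
Local Open Scope ring_scope.

(* Quasisymmetry gives rho x y <= theta (d x y / d x z) * rho x z, where theta is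
   continuous with theta 0 = 0, hence bounded on compacts and small near 0.
   Uniform shrinking of d with constant alpha means that, seen from any point x, the
   distances d x . have no multiplicative gap of ratio 2 / alpha; a rho-ball around x
   whose annulus of ratio 1 / (K + 2) is empty, K a bound of theta on [0, 2 / alpha],
   would create such a gap.  For doubling, theta < 1/2 on [0, e) shows that a rho-ball
   B_rho(x, r) <> X contains a d-ball B_d(x, s) with B_rho(x, 2r) inside B_d(x, 2^N s),
   N depending only on theta; N doublings for d then give one doubling for rho. *)

Section HomeoHalfline.
Variables (R : realType) (th : R -> R).
Hypothesis thH : homeo_halfline th.

Lemma homeo_halfline_ge0 t : 0 <= t -> 0 <= th t.
Proof. by case: thH => th' [+ _ _ _ _]; apply. Qed.

Lemma homeo_halfline_inj p q : 0 <= p -> 0 <= q -> th p = th q -> p = q.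
Proof.
case: thH => th' [_ _ thK _ _] p0 q0 pq.
by rewrite -(thK p p0) -(thK q q0) pq.
Qed.

Lemma homeo_halfline_surj v : 0 <= v -> exists2 t, 0 <= t & th t = v.
Proof. by case: thH => th' [_ th'0 _ th'K _] v0; exists (th' v); [exact: th'0|exact: th'K]. Qed.

Lemma homeo_halfline_continuous_itv a b : 0 <= a -> {within `[a, b], continuous th}.
Proof.
case: thH => th' [_ _ _ _ [thC _]] a0; apply: continuous_subspaceW thC => t /=.
by rewrite in_itv /= => /andP[+ _]; exact: le_trans.
Qed.

Lemma homeo_halfline0 : th 0 = 0.
Proof.
have a0 := homeo_halfline_ge0 (lexx 0); set a := th 0 in a0 *.
apply/eqP; rewrite eq_le a0 andbT leNgt; apply/negP => apos.
have [b b0 thb] := homeo_halfline_surj (lexx 0).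
have [c c0 thc] := homeo_halfline_surj (addr_ge0 a0 ler01).
(* th would take the value th 0 at some point between th^-1 0 and th^-1 (th 0 + 1), both > 0 *)
have ivt u v : 0 < u <= v -> minr (th u) (th v) <= a <= maxr (th u) (th v) -> False.
  move=> /andP[u0 uv] /(IVT uv (homeo_halfline_continuous_itv (ltW u0))) [p].
  rewrite in_itv /= => /andP[up _] /homeo_halfline_inj eqp0.
  by have := lt_le_trans u0 up; rewrite (eqp0 (le_trans (ltW u0) up) (lexx 0)) ltxx.
have b_gt0 : 0 < b.
  by rewrite lt_def b0 andbT; apply/eqP => eb; move: apos; rewrite /a -[in th _]eb thb ltxx.
have c_gt0 : 0 < c.
  by rewrite lt_def c0 andbT; apply/eqP => ec; move: thc; rewrite ec -/a; lra.
have [bc|cb] := leP b c.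
  by apply: (ivt b c); rewrite ?b_gt0 ?bc // thb thc ge_min le_max a0 lerDl ler01 orbT.
by apply: (ivt c b); rewrite ?c_gt0 ?(ltW cb) // thb thc ge_min le_max a0 lerDl ler01 !orbT.
Qed.

Lemma homeo_halfline_small eta : 0 < eta ->
  exists2 e, 0 < e & forall t, 0 <= t < e -> th t < eta.
Proof.
case: thH => th' [_ _ _ _ [thC _]] eta0.
have := (subspace_continuousP _ _).1 thC 0 (lexx 0).
rewrite /from_subspace homeo_halfline0 => /cvgrPdist_lt /(_ _ eta0).
rewrite near_withinE => /nbhs_ballP [e e0 near0]; exists e => // t /andP[t0 te].
have /near0/(_ t0) : ball 0 e t by rewrite /ball /= sub0r normrN ger0_norm.
by rewrite sub0r normrN => /(le_lt_trans (ler_norm _)).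
Qed.

Lemma homeo_halfline_bounded c : 0 <= c ->
  exists2 K, 0 <= K & forall t, 0 <= t <= c -> th t <= K.
Proof.
move=> c0; have [m] := EVT_max c0 (homeo_halfline_continuous_itv (lexx 0)).
rewrite in_itv /= => /andP[m0 _] thm.
by exists (th m); [exact: homeo_halfline_ge0|move=> t tc; apply: thm; rewrite in_itv].
Qed.

End HomeoHalfline.

Lemma exists_tight_lower_bound (R : realType) (T : Type) (f : T -> R) (P : set T)
    (z0 : T) (delta : R) :
  0 < delta -> P z0 -> (forall z, P z -> delta <= f z) ->
  exists2 s, 0 < s & (forall z, P z -> s <= f z) /\ exists2 z, P z & f z < 2 * s.
Proof.
move=> delta0 Pz0 fP; set s := inf (f @` P).
have fP0 : (f @` P) !=set0 by exists (f z0), z0.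
have fPlb : lbound (f @` P) delta by move=> _ [z Pz <-]; exact: fP.
have s0 : 0 < s by apply: lt_le_trans delta0 (lb_le_inf fP0 fPlb).
exists s => //; split; first by move=> z Pz; apply: ge_inf; [exists delta|exists z].
have [_ [z Pz <-] fzs] := inf_adherent s0 (conj fP0 (ex_intro _ delta fPlb)).
by exists z => //; lra.
Qed.

Section Metric.
Variables (R : realType) (X : Type) (d : X -> X -> R).

Definition metric_open (A : set X) : Prop :=
  forall x, A x -> exists r, 0 < r /\ oball d x r `<=` A.

Hypothesis dm : is_metric d.

Lemma metric_ge0 x y : 0 <= d x y. Proof. by case: dm. Qed.

Lemma metric_xx x : d x x = 0. Proof. by case: dm => _ d0 _ _; exact/d0. Qed.

Lemma metric_gt0 x y : x <> y -> 0 < d x y.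
Proof. by case: dm => _ d0 _ _ xy; rewrite lt_def metric_ge0 andbT; apply/eqP => /d0. Qed.

Lemma metric_triangle x y z : d x z <= d x y + d y z. Proof. by case: dm. Qed.

Lemma oball_open x r : metric_open (oball d x r).
Proof.
move=> y dxy; exists (r - d x y); split => [|w dyw]; first by rewrite subr_gt0.
by have := metric_triangle x y w; rewrite /oball /= in dxy dyw *; lra.
Qed.

Lemma uniformly_shrinking_gap : uniformly_shrinking d ->
  exists2 lam, 0 < lam & forall x (D : set X) y0 z0, D y0 -> y0 <> x -> ~ D z0 ->
    exists y z, [/\ D y, y <> x, ~ D z & d x z < lam * d x y].
Proof.
move=> [al [/andP[al0 al1] shr]].
have lam0 : 0 < 2 / al by rewrite divr_gt0.
exists (2 / al) => // x D y0 z0 Dy0 y0x Dz0.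
have lamE : al * (2 / al) = 2 by rewrite mulrC divfK ?gt_eqF.
apply: contrapT => nogap.
have gap y z : D y -> ~ D z -> 2 / al * d x y <= d x z.
  move=> Dy Dz; have [->|yx] := pselect (y = x).
    by rewrite metric_xx mulr0 metric_ge0.
  by rewrite leNgt; apply/negP => lt; apply: nogap; exists y, z.
have dy0 := metric_gt0 (nesym y0x).
have [s s0 [sD [z1 Dz1 z1s]]] := exists_tight_lower_bound (f := d x)
  (mulr_gt0 lam0 dy0) Dz0 (fun z => gap y0 z Dy0).
have ballD : oball d x s `<=` D.
  by move=> y dy; apply: contrapT => /sD; rewrite leNgt dy.
have [||y [/ballD Dy]] := shr x s s0.
- by move=> ballT; apply: Dz1; apply: ballD; rewrite ballT.
- move=> ballx; suff : oball d x s y0 by rewrite ballx.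
  have := gap _ _ Dy0 Dz1; rewrite /oball /=; nra.
- by have := gap _ _ Dy Dz1; rewrite /oball /=; nra.
Qed.

End Metric.

Section Quasisymmetric.
Variables (R : realType) (X : Type) (d rho : X -> X -> R) (th : R -> R).
Hypotheses (dm : is_metric d) (rm : is_metric rho) (thH : homeo_halfline th)
  (qs : forall x y z, x <> z -> rho x y / rho x z <= th (d x y / d x z)).

Lemma qs_le x y z : x <> z -> rho x y <= th (d x y / d x z) * rho x z.
Proof. by move=> xz; rewrite -ler_pdivrMr ?(metric_gt0 rm) //; exact: qs. Qed.

Lemma qs_rho_continuous x eta : 0 < eta ->
  exists2 del, 0 < del & forall w, d x w < del -> rho x w < eta.
Proof.
move=> eta0; have [[z zx]|/forallNP single] := pselect (exists z, z <> x); last first.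
  exists 1 => // w _; have -> : w = x by apply: contrapT; exact: single.
  by rewrite (metric_xx rm).
have dxz := metric_gt0 dm (nesym zx); have rxz := metric_gt0 rm (nesym zx).
have [e e0 the] := homeo_halfline_small thH (divr_gt0 eta0 rxz).
exists (e * d x z) => [|w dxw]; first exact: mulr_gt0.
apply: le_lt_trans (qs_le w (nesym zx)) _; rewrite -ltr_pdivlMr //; apply: the.
by rewrite divr_ge0 ?(metric_ge0 dm) //= ltr_pdivrMr.
Qed.

Lemma oball_rho_open x r : metric_open d (oball rho x r).
Proof.
move=> y rxy; have [del del0 near_y] : exists2 del, 0 < del &
    forall w, d y w < del -> rho y w < r - rho x y.
  by apply: qs_rho_continuous; rewrite subr_gt0.
exists del; split => // w /near_y ryw.
by have := metric_triangle rm x y w; rewrite /oball /=; lra.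
Qed.

Lemma qs_uniformly_shrinking : uniformly_shrinking d -> uniformly_shrinking rho.
Proof.
move=> /(uniformly_shrinking_gap dm) [lam lam0 gap].
have [K K0 thK] := homeo_halfline_bounded thH (ltW lam0).
have K2 : 0 < K + 2 by lra.
exists (K + 2)^-1; split.
  by rewrite invr_gt0 K2 /= invf_lt1 //; lra.
move=> x r r0 ballT ballx; apply: contrapT => no_annulus.
have inner y : rho x y < r -> (K + 2) * rho x y < r.
  by move=> rxy; rewrite -ltr_pdivlMl //; apply: contrapT => ?; apply: no_annulus; exists y.
have /setTPn [z0 Dz0] : oball rho x r != setT by apply/eqP.
have [y0 Dy0 y0x] : exists2 y, oball rho x r y & y <> x.
  apply: contrapT => none; apply: ballx; apply/seteqP; split => [y Dy|y ->].
    by apply: contrapT => yx; apply: none; exists y.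
  by rewrite /oball /= (metric_xx rm).
have [y [z [Dy yx Dz dz]]] := gap x _ y0 z0 Dy0 y0x Dz0.
apply: Dz; rewrite /oball /=.
apply: le_lt_trans (qs_le z (nesym yx)) _.
have thKz : th (d x z / d x y) <= K.
  apply: thK; rewrite divr_ge0 ?(metric_ge0 dm) //=.
  by rewrite ler_pdivrMr ?(metric_gt0 dm (nesym yx)) // ltW.
have rxy0 := metric_ge0 rm x y.
by have := inner y Dy; have := ler_wpM2r rxy0 thKz; lra.
Qed.

Lemma qs_oball_sandwich : exists N, forall x r, 0 < r -> oball rho x r <> setT ->
  exists2 s, 0 < s &
    oball d x s `<=` oball rho x r /\ oball rho x (2 * r) `<=` oball d x (2 ^+ N * s).
Proof.
have [e e0 the] : exists2 e, 0 < e & forall t, 0 <= t < e -> th t < 2^-1.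
  by apply: (homeo_halfline_small thH); rewrite invr_gt0.
have [N eN] : exists N, 2 <= 2 ^+ N * e.
  exists (trunc (2 / e)).+1; rewrite -ler_pdivrMr //.
  apply: ltW (lt_le_trans (truncnS_gt _) _).
  by rewrite -natrX ler_nat ltnW // ltn_expl.
exists N => x r r0 ballT.
have /setTPn [z0 Dz0] : oball rho x r != setT by apply/eqP.
have [del del0 near_x] := qs_rho_continuous x r0.
have far_x z : ~ oball rho x r z -> del <= d x z.
  by move=> Dz; rewrite leNgt; apply/negP => /near_x.
have [s s0 [sD [z Dz dz]]] :=
  exists_tight_lower_bound (f := d x) (P := ~` oball rho x r) del0 Dz0 far_x.
exists s => //; split => y.
  by rewrite /oball /= => dy; apply: contrapT => /sD; rewrite leNgt dy.
rewrite /oball /= => r2y; rewrite ltNge; apply/negP => far_y.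
have dxy : 0 < d x y by apply: lt_le_trans far_y; rewrite mulr_gt0 ?exprn_gt0.
have xy : x <> y by move=> eq_xy; move: dxy; rewrite eq_xy (metric_xx dm) ltxx.
have thz : th (d x z / d x y) < 2^-1.
  apply: the; rewrite divr_ge0 ?(metric_ge0 dm) //= ltr_pdivrMr //.
  have := ler_wpM2r (ltW e0) far_y; nra.
have rxy0 := metric_ge0 rm x y.
have := qs_le z xy; have := ler_wpM2r rxy0 (ltW thz).
rewrite /oball /= in Dz; lra.
Qed.

End Quasisymmetric.

Section Doubling.
Variables (R : realType) (dsp : measure_display) (X : measurableType dsp)
  (mu : {measure set X -> \bar R}).

Lemma oball_doubling_iter (d : X -> X -> R) (C : R) : 0 <= C ->
  (forall x r, 0 < r -> (mu (oball d x (2 * r)) <= C%:E * mu (oball d x r))%E) ->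
  forall x s n, 0 < s ->
    (mu (oball d x (2 ^+ n * s)) <= (C ^+ n)%:E * mu (oball d x s))%E.
Proof.
move=> C0 dblC x s n s0; elim: n => [|n IHn]; first by rewrite expr0 !mul1r mul1e.
rewrite exprS -mulrA; apply: le_trans (dblC _ _ _) _; first by rewrite mulr_gt0 ?exprn_gt0.
by rewrite exprS EFinM -muleA lee_wpmul2l ?lee_fin.
Qed.

Lemma VD_of_oball_sandwich (d rho : X -> X -> R) (N : nat) :
  (forall x r, measurable (oball d x r)) -> (forall x r, measurable (oball rho x r)) ->
  (forall x r, 0 < r -> oball rho x r <> setT ->
    exists2 s, 0 < s &
      oball d x s `<=` oball rho x r /\ oball rho x (2 * r) `<=` oball d x (2 ^+ N * s)) ->
  VD d mu -> VD rho mu.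
Proof.
move=> dM rhoM sandwich [C [C0 dblC]].
set K := maxr (C ^+ N) 1.
have K1 : (1 <= K%:E)%E by rewrite lee_fin le_max lexx orbT.
have CN : ((C ^+ N)%:E <= K%:E)%E by rewrite lee_fin le_max lexx.
exists K; split => [|x r r0]; first by rewrite lt_max ltr01 orbT.
have [ballT|/(sandwich x r r0) [s s0 [inner outer]]] := pselect (oball rho x r = setT).
  rewrite ballT; apply: le_trans (lee_pemull (measure_ge0 _ _) K1).
  by apply: le_measure; rewrite ?inE.
apply: le_trans (_ : (mu (oball d x (2 ^+ N * s)) <= _)%E).
  by apply: le_measure; rewrite ?inE.
apply: le_trans (oball_doubling_iter (ltW C0) dblC x N s0) _.
apply: le_trans (lee_wpmul2r (measure_ge0 _ _) CN).
by rewrite lee_wpmul2l ?lee_fin ?exprn_ge0 ?(ltW C0) //; apply: le_measure; rewrite ?inE.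
Qed.

End Doubling.

Unset Implicit Arguments.

Theorem lemma6p1 (R : realType) (dsp : measure_display) (X : measurableType dsp)
  (d rho : X -> X -> R) :
  is_metric d -> is_metric rho -> quasisymmetric d rho ->
  uniformly_shrinking d ->
  uniformly_shrinking rho /\
  (forall mu : {measure set X -> \bar R},
     d_open_measurable d -> VD d mu -> VD rho mu).
Proof.
move=> dm rm [th [thH qs]] shr_d.
split; first exact: (qs_uniformly_shrinking dm rm thH qs shr_d).
move=> mu d_open; have [N sandwich] := qs_oball_sandwich dm rm thH qs.
apply: VD_of_oball_sandwich sandwich => x r; apply: d_open.
  exact: (oball_open dm).
exact: (oball_rho_open dm rm thH qs).
Qed.
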